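(* Let $n,m\ge 1$, let $G\in\mathbb{R}^{2n\times 2n}$ be symmetric, let $C\in\mathbb{R}^{2m\times 2n}$, and set $A=\Sigma_n(G+C^\top\Sigma_m C/2)$. Define the controllability matrix $\mathcal{C}=(\Sigma_n C^\top\Sigma_m,\ A\Sigma_n C^\top\Sigma_m,\ \ldots,\ A^{2n-1}\Sigma_n C^\top\Sigma_m)$ and the observability matrix $\mathcal{O}=(C^\top,\ A^\top C^\top,\ \ldots,\ (A^\top)^{2n-1}C^\top)^\top$. Then for every vector $v\in\mathbb{R}^{2n}$, $$\Sigma_n v\in \mathrm{Ker}(\mathcal{O}) \iff v\in\mathrm{Ker}(\mathcal{C}^\top).$$
   Context: For $k\ge1$, $\Sigma_k$ denotes the $2k\times 2k$ block-diagonal matrix $\mathrm{diag}\{\Sigma,\ldots,\Sigma\}$ with $\Sigma=\begin{pmatrix}0&1\\-1&0\end{pmatrix}$. These matrices describe a linear quantum system $d\hat x=A\hat x\,dt+\Sigma_nC^\top\Sigma_m\,d\hat{\mathcal W}$, $d\hat{\mathcal W}^{\rm out}=C\hat x\,dt+d\hat{\mathcal W}$, where $\hat x$ is the vector of $n$ canonical position/momentum pairs, $\hat{\mathcal W}$ the input noise quadratures and $\hat{\mathcal W}^{\rm out}$ the output quadratures. *)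

From HB Require Import structures.
From mathcomp Require Import all_boot all_order all_algebra.
Unset Printing Implicit Defensive.
Import Order.TTheory GRing.Theory Num.Theory.
Local Open Scope ring_scope.

(* Sigma_k = diag(Sigma,...,Sigma), Sigma = [[0,1],[-1,0]], a (2k)x(2k) matrix.
   Indices 0..2k-1; block of index i is i %/ 2. *)
Definition Sigma_mx {R : pzRingType} (k : nat) : 'M[R]_(2 * k) :=
  \matrix_(i, j)
    if (i %/ 2 == j %/ 2)%N then
      (if ~~ odd i && odd j then 1 else if odd i && ~~ odd j then -1 else 0)
    else 0.

Fixpoint krylov {R : pzRingType} {p q : nat} (A : 'M[R]_p) (B : 'M[R]_(p, q))
    (k : nat) : 'M[R]_(p, k * q) :=
  match k with
  | 0 => 0
  | k'.+1 => row_mx B (A *m krylov A B k')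
  end.

Definition drift {R : fieldType} (n m : nat) (G : 'M[R]_(2 * n))
    (C : 'M[R]_(2 * m, 2 * n)) : 'M[R]_(2 * n) :=
  Sigma_mx n *m (G + (2%:R)^-1 *: (C^T *m Sigma_mx m *m C)).

Definition ctrb_mx {R : fieldType} (n m : nat) (G : 'M[R]_(2 * n))
    (C : 'M[R]_(2 * m, 2 * n)) : 'M[R]_(2 * n, (2 * n) * (2 * m)) :=
  krylov (drift n m G C) (Sigma_mx n *m C^T *m Sigma_mx m) (2 * n).

Definition obsv_mx {R : fieldType} (n m : nat) (G : 'M[R]_(2 * n))
    (C : 'M[R]_(2 * m, 2 * n)) : 'M[R]_((2 * n) * (2 * m), 2 * n) :=
  (krylov (drift n m G C)^T C^T (2 * n))^T.

(* Write S = Sigma_n, A for the drift and B = S C^T Sigma_m.  Since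
   Sigma^T = -Sigma and Sigma^2 = -1, we have B^T w = 0 iff C S w = 0, and the
   symmetry of G together with the antisymmetry of C^T Sigma_m C gives the
   commutation relation  S A^T = - A S + B C S.  Hence, as long as
   C S (A^T)^i v = 0 for all i < j, also S (A^T)^j v = (-A)^j S v, and an
   induction on the number of block rows shows that the controllability
   conditions C S (A^T)^j v = 0 and the observability conditions
   C A^j S v = 0 (j < 2n) are equivalent. *)

From HB Require Import structures.
From mathcomp Require Import all_boot all_order all_algebra.
From mathcomp Require Import zify.
Import Order.TTheory GRing.Theory Num.Theory.
Local Open Scope ring_scope.

Lemma eq_half_odd (i j : nat) : ((i %/ 2 == j %/ 2) && (odd i == odd j))%N = (i == j).
Proof.
apply/andP/eqP => [[/eqP hd /eqP ho] | -> //].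
by rewrite [i](divn_eq i 2) [j](divn_eq j 2) !modn2 hd ho.
Qed.

Section SigmaMatrix.

Variables (R : pzRingType) (k : nat).

Lemma Sigma_mxE (i j : 'I_(2 * k)) :
  Sigma_mx k i j =
    if (i %/ 2 == j %/ 2)%N && (odd i != odd j) then (-1) ^+ odd i else 0 :> R.
Proof. by rewrite mxE; case: eqP; case: (odd i); case: (odd j). Qed.

Lemma tr_Sigma_mx : (Sigma_mx k)^T = - Sigma_mx k :> 'M[R]_(2 * k).
Proof.
apply/matrixP => i j; rewrite [LHS]mxE [RHS]mxE !Sigma_mxE.
rewrite [odd j == _]eq_sym [(j %/ 2 == _)%N]eq_sym.
by case: (odd i); case: (odd j); rewrite /= ?andbF ?oppr0 //; case: ifP; rewrite ?opprK ?oppr0.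
Qed.

Lemma mulmx_Sigma_mx : Sigma_mx k *m Sigma_mx k = - 1%:M :> 'M[R]_(2 * k).
Proof.
apply/matrixP => i l; rewrite [RHS]mxE [in RHS]mxE [LHS]mxE.
pose p := if odd i then i.-1 else i.+1.
have lt_p : (p < 2 * k)%N.
  by have := ltn_ord i; have := modn2 i; rewrite /p; case: (odd i) => /=; lia.
have [hd ho] : (p %/ 2 = i %/ 2)%N /\ odd p = ~~ odd i.
  by rewrite /p; have := modn2 i; case: (odd i) => ?; split; lia.
rewrite (bigD1 (Ordinal lt_p)) //= big1 => [|j /negPf neq_jp]; last first.
  rewrite Sigma_mxE; case: ifP => [/andP[/eqP hj oj]|]; last by rewrite mul0r.
  suff : Ordinal lt_p == j by rewrite eq_sym neq_jp.
  rewrite -val_eqE -eq_half_odd /= hd hj eqxx ho.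
  by move: oj; case: (odd i); case: (odd j).
rewrite !Sigma_mxE hd ho eqxx /= addr0.
have -> : (i %/ 2 == l %/ 2)%N && (~~ odd i != odd l) = (i == l).
  by rewrite -val_eqE -[RHS]eq_half_odd; case: (odd i); case: (odd l).
rewrite (_ : odd i != ~~ odd i); last by case: (odd i).
by case: (i == l); case: (odd i); rewrite /= ?mulN1r ?mul1r ?mulr0 ?oppr0.
Qed.

Lemma Sigma_mx_mul_eq0 q (x : 'M[R]_(2 * k, q)) : Sigma_mx k *m x = 0 <-> x = 0.
Proof.
split=> [sx0 | ->]; last by rewrite mulmx0.
have := congr1 (mulmx (Sigma_mx k)) sx0.
by rewrite mulmxA mulmx_Sigma_mx mulmx0 mulNmx mul1mx => /eqP; rewrite oppr_eq0 => /eqP.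
Qed.

End SigmaMatrix.

Lemma tr_krylov_mul_eq0 (R : comPzRingType) p q (A : 'M[R]_p) (B : 'M[R]_(p, q))
    k (x : 'cV[R]_p) :
  (krylov A B k)^T *m x = 0 <->
  (forall j, (j < k)%N -> B^T *m iter j (mulmx A^T) x = 0).
Proof.
elim: k x => [|k IHk] x /=; first by rewrite trmx0 mul0mx.
rewrite tr_row_mx mul_col_mx (rwP eqP) col_mx_eq0 -(rwP andP) -!(rwP eqP).
rewrite trmx_mul -mulmxA IHk.
split=> [[Bx0 BAx0] [|j] //= lt_jk | Bx0]; first by rewrite -iterS iterSr BAx0.
by split=> [|j lt_jk]; [apply: (Bx0 0%N) | rewrite -iterSr; exact: (Bx0 j.+1)].
Qed.

Lemma iter_mulNmx (R : comPzRingType) p (N : 'M[R]_p) (x : 'cV[R]_p) j :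
  iter j (mulmx (- N)) x = (-1) ^+ j *: iter j (mulmx N) x.
Proof.
elim: j => [|j IHj] /=; first by rewrite scale1r.
by rewrite IHj mulNmx -scalemxAr exprS -scalerA scaleN1r.
Qed.

Section TwistedIterates.

Context {R : comPzRingType} {p q : nat}.
Context {S M N : 'M[R]_p} {D : 'M[R]_(p, q)} {C : 'M[R]_(q, p)}.
Hypothesis twist : S *m M = - (N *m S) + D *m (C *m S).

Lemma mul_iter_twist (x : 'cV[R]_p) j :
  (forall i, (i < j)%N -> C *m (S *m iter i (mulmx M) x) = 0) ->
  S *m iter j (mulmx M) x = iter j (mulmx (- N)) (S *m x).
Proof.
elim: j => [//|j IHj] CSx0 /=.
rewrite mulmxA twist mulmxDl mulNmx -!mulmxA CSx0 // mulmx0 addr0.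
by rewrite mulNmx IHj // => i lt_ij; apply/CSx0/ltnW.
Qed.

Lemma twisted_iter_kernel (x : 'cV[R]_p) k :
  (forall j, (j < k)%N -> C *m (S *m iter j (mulmx M) x) = 0) <->
  (forall j, (j < k)%N -> C *m iter j (mulmx N) (S *m x) = 0).
Proof.
have ltnS_all (P : nat -> Prop) n :
    (forall j, (j < n.+1)%N -> P j) <-> (forall j, (j < n)%N -> P j) /\ P n.
  split=> [Plt | [Plt Pn] j]; first by split=> [j lt_jn|]; apply: Plt => //; exact: ltnW.
  by rewrite ltnS leq_eqVlt => /predU1P[->|/Plt].
elim: k => [//|k IHk]; rewrite !ltnS_all -IHk.
split=> -[CSx0 at_k]; split=> //; move: at_k;
  rewrite mul_iter_twist // iter_mulNmx -scalemxAr.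
  by move/(congr1 ( *:%R ((-1) ^+ k))); rewrite signrZK scaler0.
by move->; rewrite scaler0.
Qed.

End TwistedIterates.

Lemma Sigma_mx_tr_drift {R : fieldType} {n m : nat} {G : 'M[R]_(2 * n)}
    (C : 'M[R]_(2 * m, 2 * n)) :
  2%:R != 0 :> R -> G^T = G ->
  Sigma_mx n *m (drift n m G C)^T =
  - (drift n m G C *m Sigma_mx n) +
    (Sigma_mx n *m C^T *m Sigma_mx m) *m (C *m Sigma_mx n).
Proof.
move=> two_neq0 sym_G; rewrite /drift.
set S := Sigma_mx n; set X := C^T *m Sigma_mx m *m C; set h : R := 2%:R^-1.
have -> : S *m C^T *m Sigma_mx m *m (C *m S) = S *m X *m S by rewrite !mulmxA.
have tr_X : X^T = - X by rewrite !trmx_mul trmxK tr_Sigma_mx mulNmx mulmxN mulmxA.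
have halves : h + h = 1 by rewrite -mulr2n -mulr_natl mulfV.
rewrite -[S *m X *m S]scale1r -halves.
rewrite trmx_mul tr_Sigma_mx raddfD /= linearZ /= tr_X sym_G -/S.
rewrite !(mulmxDl, mulmxDr, mulmxN, mulNmx, scalerN, scalerDl, opprD, opprK).
by rewrite -!scalemxAl -!scalemxAr !mulmxA -!scalemxAl addrA addrNK.
Qed.

Theorem lemma1 (R : realFieldType) (n m : nat) (hn : (1 <= n)%N) (hm : (1 <= m)%N)
    (G : 'M[R]_(2 * n)) (C : 'M[R]_(2 * m, 2 * n)) (hG : G^T = G)
    (v : 'cV[R]_(2 * n)) :
  obsv_mx n m G C *m (Sigma_mx n *m v) = 0 <-> (ctrb_mx n m G C)^T *m v = 0.
Proof.
have two_neq0 : 2%:R != 0 :> R by rewrite pnatr_eq0.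
have input_ker (w : 'cV[R]_(2 * n)) :
    (Sigma_mx n *m C^T *m Sigma_mx m)^T *m w = 0 <-> C *m (Sigma_mx n *m w) = 0.
  rewrite !trmx_mul trmxK !tr_Sigma_mx !(mulNmx, mulmxN) opprK -!mulmxA.
  exact: Sigma_mx_mul_eq0.
rewrite /obsv_mx /ctrb_mx !tr_krylov_mul_eq0 !trmxK.
rewrite -(twisted_iter_kernel (Sigma_mx_tr_drift C two_neq0 hG)).
by split=> ker_j j lt_j; apply/input_ker/ker_j.
Qed.
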